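(* Let $T$ be a c.n.u. contraction on $H$ and let $(H_+,H_-,\Gamma_+,\Gamma_-)$ be a boundary quadruple for $A_T^{\perp_s}$ with contractive Weyl function $B$, such that the graph of $T$ equals $\{a\in A_T^{\perp_s}:\Gamma_-a=0\}$. Let $\mathfrak{T}$ be the operator on $\{f_{\hat x}:x\in H\}$ defined by $\mathfrak{T}f_{\hat x}=f_{\widehat{Tx}}$. Then for every $f=f_{\hat x}$, $x\in H$, $$(\mathfrak{T}f)(\lambda)=\lambda f(\lambda)-B(\lambda)f(0_-)\quad\text{for all }\lambda\in\mathbb{D}_+,$$ $$(\mathfrak{T}f)(\lambda)=\frac{f(\lambda)-f(0_-)}{\lambda}\quad\text{for all }\lambda\in\mathbb{D}_-\setminus\{0_-\}.$$
   Context: $H$ is an infinite-dimensional separable complex Hilbert space with inner product $(\cdot,\cdot)_H$; $T\in\mathbb{B}(H)$, $\|T\|\le1$, is completely non-unitary. $\mathbb{K}=\ker(I-T^*T)$. $\mathbb{H}=H\oplus_\perp H$ with $[(x_1,x_2),(y_1,y_2)]=i(x_1,y_1)_H-i(x_2,y_2)_H$; $S^{\perp_s}=\{a:[a,b]=0\ \forall b\in S\}$; $A_T=\{(x,Tx):x\in\mathbb{K}\}$. $\mathbb{D}_\pm$ are two copies of the open unit disc with centers $0_\pm$; for $\lambda\in\mathbb{D}_\pm$, $\bar\lambda$ is regarded as a point of $\mathbb{D}_\mp$. $N_\lambda=\{(x,\lambda x)\}\cap A_T^{\perp_s}$ ($\lambda\in\mathbb{D}_+$), $N_\lambda=\{(\lambda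 x,x)\}\cap A_T^{\perp_s}$ ($\lambda\in\mathbb{D}_-$). Boundary quadruple: Hilbert spaces $H_\pm$, linear $\Gamma_\pm:A_T^{\perp_s}\to H_\pm$ with $(\Gamma_+,\Gamma_-)$ bounded, onto $H_+\oplus_\perp H_-$, kernel $A_T$, and $[a,b]=i(\Gamma_+a,\Gamma_+b)-i(\Gamma_-a,\Gamma_-b)$. Contractive Weyl function $B$: for $\lambda\in\mathbb{D}_+$, $\Gamma_+|_{N_\lambda}$ bijective onto $H_+$, $\Gamma_-a=B(\lambda)\Gamma_+a$ on $N_\lambda$; for $\lambda\in\mathbb{D}_-$, $\Gamma_-|_{N_\lambda}$ bijective onto $H_-$, $\Gamma_+a=B(\bar\lambda)^*\Gamma_-a$ on $N_\lambda$. $\gamma_+(\lambda)z\in N_\lambda$ with $\Gamma_+\gamma_+(\lambda)z=z$ ($\lambda\in\mathbb{D}_+$), $\gamma_-(\lambda)z\in N_\lambda$ with $\Gamma_-\gamma_-(\lambda)z=z$ ($\lambda\in\mathbb{D}_-$); $\varphi_+=pr_1\circ\gamma_+$, $\varphi_-=pr_2\circ\gamma_-$. $E_\lambda=pr_1(N_\lambda)$ or $pr_2(N_\lambda)$ for $\lambda\in\mathbb{D}_+$ or $\mathbb{D}_-$; $F^\dagger_\lambda=E_{\bar\lambda}$, $F_\lambda$ its conjugate-linear dual, pairing $((\cdot,\cdot))$. For $x\in H$, $\hat x(\lambda)\in F_\lambda$ is $\omega\mapsto(x,\omega)_H$ (and $x\mapsto\hat x$ is injective). For $\lambda\in\mathbb{D}_+$,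 $(\varphi_-^\dagger(\lambda)\omega,z)_{H_-}=((\omega,\varphi_-(\bar\lambda)z))$; for $\lambda\in\mathbb{D}_-$, $(\varphi_+^\dagger(\lambda)\omega,z)_{H_+}=((\omega,\varphi_+(\bar\lambda)z))$; $f_s(\lambda)=\varphi_-^\dagger(\lambda)s(\lambda)$ on $\mathbb{D}_+$ and $\varphi_+^\dagger(\lambda)s(\lambda)$ on $\mathbb{D}_-$. *)

(* Hilbert spaces are modelled as R[i]-vector spaces with an
   inner product (linear in the 1st, conjugate-linear in the 2nd argument)
   that is complete for the induced norm. *)
From HB Require Import structures.
From mathcomp Require Import all_boot all_order all_algebra.
From mathcomp Require Import complex reals.
Set Implicit Arguments. Unset Strict Implicit. Unset Printing Implicit Defensive.
Import Order.TTheory GRing.Theory Num.Theory.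
Local Open Scope ring_scope.

Section Hilbert.
Variables (R : realType) (V : lmodType R[i]) (ip : V -> V -> R[i]).

Definition inner_product : Prop :=
  [/\ forall (a : R[i]) (x y z : V), ip (a *: x + y) z = a * ip x z + ip y z,
      forall x y : V, ip y x = conjc (ip x y) &
      forall x : V, x != 0 -> 0 < ip x x].

(* squared norm ||x||^2 = (x,x) (a nonnegative real number inside R[i]) *)
Definition nsq (x : V) : R[i] := ip x x.

Definition cauchy_seq (u : nat -> V) : Prop :=
  forall e : R[i], 0 < e -> exists N : nat,
    forall m n : nat, (N <= m)%N -> (N <= n)%N -> nsq (u m - u n) < e.

Definition seq_converges (u : nat -> V) (l : V) : Prop :=
  forall e : R[i], 0 < e -> exists N : nat,
    forall n : nat, (N <= n)%N -> nsq (u n - l) < e.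

Definition complete : Prop :=
  forall u : nat -> V, cauchy_seq u -> exists l : V, seq_converges u l.

Definition hilbert_space : Prop := inner_product /\ complete.

Definition separable : Prop :=
  exists d : nat -> V, forall (x : V) (e : R[i]), 0 < e ->
    exists n : nat, nsq (x - d n) < e.

Definition closed_subspace (M : V -> Prop) : Prop :=
  [/\ M 0,
      forall (a : R[i]) (x y : V), M x -> M y -> M (a *: x + y) &
      forall (u : nat -> V) (l : V), (forall n, M (u n)) -> seq_converges u l -> M l].
End Hilbert.

Definition infinite_dimensional (R : realType) (V : lmodType R[i]) : Prop :=
  forall n : nat, exists v : 'I_n -> V,
    forall c : 'I_n -> R[i], \sum_(k < n) c k *: v k = 0 -> forall k, c k = 0.

Definition is_adjoint (R : realType) (V W : lmodType R[i])
  (ipV : V -> V -> R[i]) (ipW : W -> W -> R[i]) (A : V -> W) (As : W -> V) : Prop :=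
  forall (x : V) (y : W), ipW (A x) y = ipV x (As y).

Definition contraction (R : realType) (V : lmodType R[i]) (ip : V -> V -> R[i])
  (T : V -> V) : Prop :=
  forall x : V, nsq ip (T x) <= nsq ip x.

Definition completely_non_unitary (R : realType) (V : lmodType R[i])
  (ip : V -> V -> R[i]) (T Ts : V -> V) : Prop :=
  forall M : V -> Prop, closed_subspace ip M ->
    (forall x, M x -> M (T x)) -> (forall x, M x -> M (Ts x)) ->
    (forall x, M x -> Ts (T x) = x /\ T (Ts x) = x) ->
    forall x, M x -> x = 0.

Section Krein.
Variables (R : realType) (H : lmodType R[i]) (ip : H -> H -> R[i]).

Definition sform (a b : H * H) : R[i] :=
  'i%C * ip a.1 b.1 - 'i%C * ip a.2 b.2.

Definition sperp (S : H * H -> Prop) (a : H * H) : Prop :=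
  forall b, S b -> sform a b = 0.

Definition Kspace (T Ts : H -> H) (x : H) : Prop := x - Ts (T x) = 0.

Definition A_T (T Ts : H -> H) (a : H * H) : Prop :=
  Kspace T Ts a.1 /\ a.2 = T a.1.

Definition graph (T : H -> H) (a : H * H) : Prop := a.2 = T a.1.

(* N_lambda for lambda in D_+ (Nplus) and in D_- (Nminus), P = A_T^{perp_s};
   a point of D_+ / D_- is represented by a complex number of modulus < 1
   together with the choice of the function (Nplus / Nminus). *)
Definition Nplus (P : H * H -> Prop) (l : R[i]) (a : H * H) : Prop :=
  a.2 = l *: a.1 /\ P a.
Definition Nminus (P : H * H -> Prop) (l : R[i]) (a : H * H) : Prop :=
  a.1 = l *: a.2 /\ P a.

Definition Eplus (P : H * H -> Prop) (l : R[i]) (x : H) : Prop :=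
  exists a, Nplus P l a /\ a.1 = x.
Definition Eminus (P : H * H -> Prop) (l : R[i]) (x : H) : Prop :=
  exists a, Nminus P l a /\ a.2 = x.

Definition conj_dual (E : H -> Prop) (w : H -> R[i]) : Prop :=
  (forall (a : R[i]) (u v : H), E u -> E v -> w (a *: u + v) = conjc a * w u + w v) /\
  exists M : R[i], 0 <= M /\ forall u, E u -> `|w u| ^+ 2 <= M * nsq ip u.

(* F_lambda = conjugate-linear dual of F^dagger_lambda = E_{conj lambda};
   for lambda in D_+, conj lambda is in D_-, and vice versa *)
Definition Fplus (P : H * H -> Prop) (l : R[i]) (w : H -> R[i]) : Prop :=
  conj_dual (Eminus P (conjc l)) w.
Definition Fminus (P : H * H -> Prop) (l : R[i]) (w : H -> R[i]) : Prop :=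
  conj_dual (Eplus P (conjc l)) w.

Definition pairing (w : H -> R[i]) (u : H) : R[i] := w u.

Definition hat (x : H) : R[i] -> (H -> R[i]) := fun _ w => ip x w.
End Krein.

Record boundary_quadruple (R : realType) (H Hp Hm : lmodType R[i])
  (ip : H -> H -> R[i]) (ipp : Hp -> Hp -> R[i]) (ipm : Hm -> Hm -> R[i])
  (P AT : H * H -> Prop) (Gp : H * H -> Hp) (Gm : H * H -> Hm) : Prop := {
  bq_Hp : hilbert_space ipp;
  bq_Hm : hilbert_space ipm;
  bq_linear : forall (c : R[i]) (a b : H * H), P a -> P b ->
      Gp (c *: a + b) = c *: Gp a + Gp b /\ Gm (c *: a + b) = c *: Gm a + Gm b;
  bq_bounded : exists M : R[i], 0 <= M /\ forall a, P a ->
      nsq ipp (Gp a) + nsq ipm (Gm a) <= M * (nsq ip a.1 + nsq ip a.2);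
  bq_onto : forall (u : Hp) (v : Hm), exists a, P a /\ Gp a = u /\ Gm a = v;
  bq_kernel : forall a, (P a /\ Gp a = 0 /\ Gm a = 0) <-> AT a;
  bq_green : forall a b, P a -> P b ->
      sform ip a b = 'i%C * ipp (Gp a) (Gp b) - 'i%C * ipm (Gm a) (Gm b) }.

(* B(mu) for mu in D_+; Bs mu stands for B(mu)^* *)
Definition contractive_weyl_function (R : realType) (H Hp Hm : lmodType R[i])
  (P : H * H -> Prop) (Gp : H * H -> Hp) (Gm : H * H -> Hm)
  (B : R[i] -> Hp -> Hm) (Bs : R[i] -> Hm -> Hp) : Prop :=
  (forall l : R[i], `|l| < 1 ->
     (forall u : Hp, exists! a, Nplus P l a /\ Gp a = u) /\
     (forall a, Nplus P l a -> Gm a = B l (Gp a))) /\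
  (forall l : R[i], `|l| < 1 ->
     (forall v : Hm, exists! a, Nminus P l a /\ Gm a = v) /\
     (forall a, Nminus P l a -> Gp a = Bs (conjc l) (Gm a))).

Definition gamma_plus_spec (R : realType) (H Hp : lmodType R[i])
  (P : H * H -> Prop) (Gp : H * H -> Hp) (gp : R[i] -> Hp -> H * H) : Prop :=
  forall l : R[i], `|l| < 1 -> forall z : Hp, Nplus P l (gp l z) /\ Gp (gp l z) = z.
Definition gamma_minus_spec (R : realType) (H Hm : lmodType R[i])
  (P : H * H -> Prop) (Gm : H * H -> Hm) (gm : R[i] -> Hm -> H * H) : Prop :=
  forall l : R[i], `|l| < 1 -> forall z : Hm, Nminus P l (gm l z) /\ Gm (gm l z) = z.

Definition phi_plus (R : realType) (H Hp : lmodType R[i])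
  (gp : R[i] -> Hp -> H * H) (l : R[i]) (z : Hp) : H := (gp l z).1.
Definition phi_minus (R : realType) (H Hm : lmodType R[i])
  (gm : R[i] -> Hm -> H * H) (l : R[i]) (z : Hm) : H := (gm l z).2.

Definition phidag_minus_spec (R : realType) (H Hm : lmodType R[i])
  (ip : H -> H -> R[i]) (ipm : Hm -> Hm -> R[i]) (P : H * H -> Prop)
  (gm : R[i] -> Hm -> H * H) (pdm : R[i] -> (H -> R[i]) -> Hm) : Prop :=
  forall l : R[i], `|l| < 1 -> forall w : H -> R[i], Fplus ip P l w ->
    forall z : Hm, ipm (pdm l w) z = pairing w (phi_minus gm (conjc l) z).
Definition phidag_plus_spec (R : realType) (H Hp : lmodType R[i])
  (ip : H -> H -> R[i]) (ipp : Hp -> Hp -> R[i]) (P : H * H -> Prop)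
  (gp : R[i] -> Hp -> H * H) (pdp : R[i] -> (H -> R[i]) -> Hp) : Prop :=
  forall l : R[i], `|l| < 1 -> forall w : H -> R[i], Fminus ip P l w ->
    forall z : Hp, ipp (pdp l w) z = pairing w (phi_plus gp (conjc l) z).

Definition fplus (R : realType) (H Hm : lmodType R[i])
  (pdm : R[i] -> (H -> R[i]) -> Hm) (s : R[i] -> (H -> R[i])) (l : R[i]) : Hm :=
  pdm l (s l).
Definition fminus (R : realType) (H Hp : lmodType R[i])
  (pdp : R[i] -> (H -> R[i]) -> Hp) (s : R[i] -> (H -> R[i])) (l : R[i]) : Hp :=
  pdp l (s l).

From HB Require Import structures.
From mathcomp Require Import all_boot all_order all_algebra.
From mathcomp Require Import complex reals.
From mathcomp Require Import ring.
Import Order.TTheory GRing.Theory Num.Theory.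
Local Open Scope ring_scope.

Set Implicit Arguments. Unset Strict Implicit.

(* Only Green's identity enters.  For b = (x, Tx) in the graph of T we have
   Gamma_- b = 0, so Green's identity against any a in A_T^{perp_s} reads
   (x, a_1) - (Tx, a_2) = (Gamma_+ b, Gamma_+ a)_{H_+}.  Taking a = gamma_+(mu) z
   (where a_2 = mu a_1) and a = gamma_-(nu) z (where a_1 = nu a_2, and
   Gamma_+ a = B(conj nu)^* z) and comparing with mu = 0 gives both formulas
   after pairing f_{hat x} and f_{hat (Tx)} against an arbitrary z. *)

Section InnerProduct.
Variables (R : realType) (V : lmodType R[i]) (ip : V -> V -> R[i]).
Hypothesis ipP : inner_product ip.

Lemma ipDl x y z : ip (x + y) z = ip x z + ip y z.
Proof. by case: ipP => lin _ _; have := lin 1 x y z; rewrite scale1r mul1r. Qed.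

Lemma ip0l z : ip 0 z = 0.
Proof. by have := ipDl 0 0 z; rewrite addr0 => /esym/(canRL (addrK _)); rewrite subrr. Qed.

Lemma ipZl a x z : ip (a *: x) z = a * ip x z.
Proof. by case: ipP => lin _ _; have := lin a x 0 z; rewrite addr0 ip0l addr0. Qed.

Lemma ip_conj x y : ip y x = conjc (ip x y).
Proof. by case: ipP. Qed.

Lemma ip0r z : ip z 0 = 0.
Proof. by rewrite ip_conj ip0l rmorph0. Qed.

Lemma ipZr a x y : ip x (a *: y) = conjc a * ip x y.
Proof. by rewrite ip_conj ipZl rmorphM /= -ip_conj. Qed.

Lemma ipBl x y z : ip (x - y) z = ip x z - ip y z.
Proof. by rewrite ipDl -scaleN1r ipZl mulN1r. Qed.

Lemma ipBr x y z : ip z (x - y) = ip z x - ip z y.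
Proof. by rewrite ip_conj ipBl rmorphB /= -!ip_conj. Qed.

Lemma ip_ge0 v : 0 <= ip v v.
Proof.
have [->|v0] := eqVneq v 0; first by rewrite ip0l.
by case: ipP => _ _ pos; exact/ltW/pos.
Qed.

Lemma ip_inj v w : (forall z, ip v z = ip w z) -> v = w.
Proof.
move=> eq_vw; apply/eqP; rewrite -subr_eq0; apply/negPn/negP => vw0.
by case: ipP => _ _ /(_ _ vw0); rewrite ipBl eq_vw subrr ltxx.
Qed.

Lemma ip_CauchySchwarz x u : `|ip x u| ^+ 2 <= ip x x * ip u u.
Proof.
have [->|u0] := eqVneq u 0; first by rewrite ip0r ip0l normr0 expr2 !mulr0.
have uu_gt0 : 0 < ip u u by case: ipP => _ _; apply.
have uuJ : conjc (ip u u) = ip u u by rewrite -ip_conj.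
have := ip_ge0 (ip u u *: x - ip x u *: u).
rewrite !ipBl !ipBr !ipZl !ipZr uuJ (ip_conj x u) sqr_normc => ge0.
rewrite -(ler_pM2l uu_gt0) -subr_ge0; move: ge0.
set d := ip u u; set c := ip x u; set e := ip x x.
suff -> : d * (e * d) - d * (c * c^*) =
  d * (d * e) - d * (c^* * c) - (c * (d * c^*) - c * (c^* * d)) by [].
ring.
Qed.

End InnerProduct.

Lemma hat_conj_dual (R : realType) (H : lmodType R[i]) (ip : H -> H -> R[i])
    (E : H -> Prop) (x : H) (l : R[i]) :
  inner_product ip -> conj_dual ip E (hat ip x l).
Proof.
move=> ipP; split.
  move=> a u v _ _; rewrite /hat (ip_conj ipP) (ipDl ipP) (ipZl ipP).
  by rewrite rmorphD rmorphM /= -!(ip_conj ipP).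
by exists (ip x x); split=> [|u _]; [exact: ip_ge0 | exact: ip_CauchySchwarz].
Qed.

Section BoundaryQuadruple.
Variables (R : realType) (H Hp Hm : lmodType R[i]).
Variables (ip : H -> H -> R[i]) (ipp : Hp -> Hp -> R[i]) (ipm : Hm -> Hm -> R[i]).
Variables (P AT : H * H -> Prop) (Gp : H * H -> Hp) (Gm : H * H -> Hm).
Hypothesis ipP : inner_product ip.
Hypothesis BQ : boundary_quadruple ip ipp ipm P AT Gp Gm.

Let ippP : inner_product ipp := (bq_Hp BQ).1.
Let ipmP : inner_product ipm := (bq_Hm BQ).1.

Lemma green_kerGm b a : P b -> Gm b = 0 -> P a ->
  ip b.1 a.1 - ip b.2 a.2 = ipp (Gp b) (Gp a).
Proof.
move=> Pb Gmb Pa; have i_neq0 : 'i%C != 0 :> R[i] by rewrite complexiE neq0Ci.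
apply: (mulfI i_neq0).
have := bq_green BQ Pb Pa; rewrite /sform Gmb (ip0l ipmP) mulr0 subr0 => <-.
by rewrite mulrBr.
Qed.

Variables (B : R[i] -> Hp -> Hm) (Bs : R[i] -> Hm -> Hp).
Variables (gp : R[i] -> Hp -> H * H) (gm : R[i] -> Hm -> H * H).
Variables (pdm : R[i] -> (H -> R[i]) -> Hm) (pdp : R[i] -> (H -> R[i]) -> Hp).
Hypothesis weylB : contractive_weyl_function P Gp Gm B Bs.
Hypothesis adjB : forall mu : R[i], `|mu| < 1 -> is_adjoint ipp ipm (B mu) (Bs mu).
Hypothesis gpP : gamma_plus_spec P Gp gp.
Hypothesis gmP : gamma_minus_spec P Gm gm.
Hypothesis pdmP : phidag_minus_spec ip ipm P gm pdm.
Hypothesis pdpP : phidag_plus_spec ip ipp P gp pdp.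

Lemma ip_phi_plus b l z : P b -> Gm b = 0 -> `|l| < 1 ->
  ip b.1 (phi_plus gp l z) - conjc l * ip b.2 (phi_plus gp l z) = ipp (Gp b) z.
Proof.
move=> Pb Gmb l1; have [[a2E Pa] Gpa] := gpP l1 z.
by rewrite -{3}Gpa -green_kerGm // a2E (ipZr ipP).
Qed.

Lemma ip_phi_plus0 b z : P b -> Gm b = 0 ->
  ip b.1 (phi_plus gp 0 z) = ipp (Gp b) z.
Proof.
move=> Pb Gmb; rewrite -(@ip_phi_plus b 0 z Pb Gmb) ?normr0 ?ltr01 //.
by rewrite rmorph0 mul0r subr0.
Qed.

Lemma ip_phi_minus b l z : P b -> Gm b = 0 -> `|l| < 1 ->
  conjc l * ip b.1 (phi_minus gm l z) - ip b.2 (phi_minus gm l z)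
  = ipp (Gp b) (Bs (conjc l) z).
Proof.
move=> Pb Gmb l1; have [[a1E Pa] Gma] := gmP l1 z.
rewrite -{3}Gma -(weylB.2 l l1).2 ?(conj a1E Pa) //.
by rewrite -green_kerGm // a1E (ipZr ipP).
Qed.

Lemma ipp_fminus_hat x l z : `|l| < 1 ->
  ipp (fminus pdp (hat ip x) l) z = ip x (phi_plus gp (conjc l) z).
Proof. by move=> l1; rewrite /fminus (pdpP l1 (hat_conj_dual _ _ _ ipP)). Qed.

Lemma ipm_fplus_hat x l z : `|l| < 1 ->
  ipm (fplus pdm (hat ip x) l) z = ip x (phi_minus gm (conjc l) z).
Proof. by move=> l1; rewrite /fplus (pdmP l1 (hat_conj_dual _ _ _ ipP)). Qed.

Theorem fplus_hat_kerGm b l : P b -> Gm b = 0 -> `|l| < 1 ->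
  fplus pdm (hat ip b.2) l
  = l *: fplus pdm (hat ip b.1) l - B l (fminus pdp (hat ip b.1) 0).
Proof.
move=> Pb Gmb l1; have l1J : `|conjc l| < 1 by rewrite normcJ.
have zero1 : `|0 : R[i]| < 1 by rewrite normr0 ltr01.
apply: (ip_inj ipmP) => z.
rewrite (ipBl ipmP) (ipZl ipmP) (adjB l1) !ipm_fplus_hat ?ipp_fminus_hat //.
rewrite rmorph0 ip_phi_plus0 // -[l in Bs l z]conjcK -ip_phi_minus // conjcK.
ring.
Qed.

Theorem fminus_hat_kerGm b l : P b -> Gm b = 0 -> `|l| < 1 -> l != 0 ->
  fminus pdp (hat ip b.2) l
  = l^-1 *: (fminus pdp (hat ip b.1) l - fminus pdp (hat ip b.1) 0).
Proof.
move=> Pb Gmb l1 l0; have l1J : `|conjc l| < 1 by rewrite normcJ.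
have zero1 : `|0 : R[i]| < 1 by rewrite normr0 ltr01.
apply: (ip_inj ippP) => z.
rewrite (ipZl ippP) (ipBl ippP) !ipp_fminus_hat // rmorph0 ip_phi_plus0 //.
rewrite -(@ip_phi_plus b (conjc l) z Pb Gmb l1J) conjcK.
by rewrite opprB addrC subrK (mulKf l0).
Qed.

End BoundaryQuadruple.

Theorem corollary4p18 (R : realType) (H Hp Hm : lmodType R[i])
  (ip : H -> H -> R[i]) (ipp : Hp -> Hp -> R[i]) (ipm : Hm -> Hm -> R[i])
  (T : {linear H -> H}) (Ts : H -> H)
  (Gp : H * H -> Hp) (Gm : H * H -> Hm)
  (B : R[i] -> Hp -> Hm) (Bs : R[i] -> Hm -> Hp)
  (gp : R[i] -> Hp -> H * H) (gm : R[i] -> Hm -> H * H)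
  (pdm : R[i] -> (H -> R[i]) -> Hm) (pdp : R[i] -> (H -> R[i]) -> Hp) :
  hilbert_space ip -> separable ip -> infinite_dimensional H ->
  contraction ip T -> is_adjoint ip ip T Ts -> completely_non_unitary ip T Ts ->
  boundary_quadruple ip ipp ipm (sperp ip (A_T T Ts)) (A_T T Ts) Gp Gm ->
  contractive_weyl_function (sperp ip (A_T T Ts)) Gp Gm B Bs ->
  (forall mu : R[i], `|mu| < 1 -> is_adjoint ipp ipm (B mu) (Bs mu)) ->
  (forall a : H * H, graph T a <-> (sperp ip (A_T T Ts) a /\ Gm a = 0)) ->
  gamma_plus_spec (sperp ip (A_T T Ts)) Gp gp ->
  gamma_minus_spec (sperp ip (A_T T Ts)) Gm gm ->
  phidag_minus_spec ip ipm (sperp ip (A_T T Ts)) gm pdm ->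
  phidag_plus_spec ip ipp (sperp ip (A_T T Ts)) gp pdp ->
  forall x : H,
    (forall l : R[i], `|l| < 1 ->
       fplus pdm (hat ip (T x)) l
       = l *: fplus pdm (hat ip x) l - B l (fminus pdp (hat ip x) 0)) /\
    (forall l : R[i], `|l| < 1 -> l != 0 ->
       fminus pdp (hat ip (T x)) l
       = l^-1 *: (fminus pdp (hat ip x) l - fminus pdp (hat ip x) 0)).
Proof.
move=> [ipP _] _ _ _ _ _ BQ weylB adjB graphT gpP gmP pdmP pdpP x.
have [Pb Gmb] := (graphT (x, T x)).1 erefl.
split=> l l1.
- exact: (fplus_hat_kerGm ipP BQ weylB adjB gpP gmP pdmP pdpP Pb Gmb l1).
- exact: (fminus_hat_kerGm ipP BQ gpP pdpP Pb Gmb l1).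
Qed.
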